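(* Let $S$ be a semigroup. If $S$ is not finite, then the category $\mathbf{OI}_{++}/N(S)$ is not quasi-Gröbner.
   Context: Quasi-Gröbner categories. Let $\mathcal{C}$ be a small category and $c$ an object. An admissible order on the morphisms out of $c$ is a choice, for every object $c'$, of a well-order on $\mathrm{Hom}(c,c')$ such that $f\prec f'$ implies $g\circ f\prec g\circ f'$ for all $g$. On morphisms out of $c$ put the preorder $f\le g$ iff $g=h\circ f$ for some $h$; $|c/\mathcal{C}|$ is the associated poset. A poset is Noetherian if every sequence $x_1,x_2,\dots$ has $i<j$ with $x_i\le x_j$. $\mathcal{C}$ is Gröbner if for every object $c$: (G1) morphisms out of $c$ admit an admissible order, and (G2) $|c/\mathcal{C}|$ is Noetherian. A functor $\Phi:\mathcal{C}\to\mathcal{D}$ has property (F) if for every object $d$ of $\mathcal{D}$ there are finitely many objects $c_i$ of $\mathcal{C}$ and morphisms $f_i:d\to\Phi(c_i)$ such that every $f:d\to\Phi(c)$ factors as $\Phi(g)\circ f_i$ for some $i$ and $g:c_i\to c$. $\mathcal{D}$ is quasi-Gröbner if there is a Gröbner $\mathcal{C}$ and an essentially surjective functor $\mathcal{C}\to\mathcal{D}$ with property (F). $\mathbf{OI}_{++}$ is the category of finite ordinals $[n]=\{0<1<\dots<n\}$ with $n\ge1$ and order-preserving injections. $N(S)$ is the presheaf on $\mathbf{OI}_{++}$ with $N(S)([n])=S^n$, with the nerve structure maps: for an injection $\varphi:[n]\to[m]$ and $(t_1,\dots,t_m)\in S^m$, $N(S)(\varphi)(t_1,\dots,t_m)=(s_1,\dots,s_n)$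 with $s_i=t_{\varphi(i-1)+1}t_{\varphi(i-1)+2}\cdots t_{\varphi(i)}$. $\mathbf{OI}_{++}/N(S)$ is its category of elements: objects are non-empty finite sequences $(s_1,\dots,s_n)$ of elements of $S$, and a morphism $(s_1,\dots,s_n)\to(t_1,\dots,t_m)$ is an injection $\varphi:[n]\to[m]$ in $\mathbf{OI}_{++}$ with $N(S)(\varphi)(t_1,\dots,t_m)=(s_1,\dots,s_n)$. *)

From Stdlib Require List.
From mathcomp Require Import all_boot zify.
Set Implicit Arguments. Unset Strict Implicit. Unset Printing Implicit Defensive.

Record CatData := {
  Obj :> Type;
  Hom : Obj -> Obj -> Type;
  idm : forall a, Hom a a;
  comp : forall a b c, Hom b c -> Hom a b -> Hom a c }.
Arguments Hom {C} a b : rename.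
Arguments idm {C} a : rename.
Arguments comp {C a b c} g f : rename.

Definition is_category (C : CatData) : Prop :=
  [/\ (forall (a b : C) (f : Hom a b), comp (idm b) f = f),
      (forall (a b : C) (f : Hom a b), comp f (idm a) = f) &
      (forall (a b c d : C) (f : Hom a b) (g : Hom b c) (h : Hom c d),
          comp h (comp g f) = comp (comp h g) f)].

Record Functor (C D : CatData) := {
  fobj :> C -> D;
  fhom : forall a b : C, Hom a b -> Hom (fobj a) (fobj b) }.
Arguments fhom {C D} F {a b} f : rename.

Definition is_functor (C D : CatData) (F : Functor C D) : Prop :=
  (forall a : C, fhom F (idm a) = idm (F a)) /\
  (forall (a b c : C) (f : Hom a b) (g : Hom b c),
      fhom F (comp g f) = comp (fhom F g) (fhom F f)).

Definition isomorphic (D : CatData) (a b : D) : Prop :=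
  exists (u : Hom a b) (v : Hom b a), comp u v = idm b /\ comp v u = idm a.

Definition essentially_surjective (C D : CatData) (F : Functor C D) : Prop :=
  forall d : D, exists c : C, isomorphic (F c) d.

Definition property_F (C D : CatData) (F : Functor C D) : Prop :=
  forall d : D, exists (k : nat) (cs : 'I_k -> C) (fs : forall i, Hom d (F (cs i))),
    forall (c : C) (f : Hom d (F c)),
      exists (i : 'I_k) (g : Hom (cs i) c), f = comp (fhom F g) (fs i).

Definition well_order (A : Type) (R : A -> A -> Prop) : Prop :=
  [/\ (forall x y z, R x y -> R y z -> R x z),
      (forall x y, R x y \/ x = y \/ R y x) & well_founded R].

Definition admissible_order (C : CatData) (c : C)
    (R : forall c' : C, Hom c c' -> Hom c c' -> Prop) : Prop :=
  (forall c' : C, well_order (R c')) /\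
  (forall (c' c'' : C) (g : Hom c' c'') (f f' : Hom c c'),
      R c' f f' -> R c'' (comp g f) (comp g f')).

(* morphisms out of c, and the preorder f <= g iff g = h o f;
   |c/C| is the associated poset *)
Definition out_of (C : CatData) (c : C) := {a : C & Hom c a}.

Definition under_le (C : CatData) (c : C) (x y : out_of c) : Prop :=
  exists h : Hom (projT1 x) (projT1 y), projT2 y = comp h (projT2 x).

Definition noetherian (A : Type) (le : A -> A -> Prop) : Prop :=
  forall x : nat -> A, exists i j : nat, (i < j)%N /\ le (x i) (x j).

Definition groebner (C : CatData) : Prop :=
  forall c : C, (exists R, @admissible_order C c R) /\ noetherian (@under_le C c).

Definition quasi_groebner (D : CatData) : Prop :=
  exists (C : CatData) (F : Functor C D),
    [/\ is_category C, groebner C, is_functor F,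
        essentially_surjective F & property_F F].

Definition finite_type (A : Type) : Prop :=
  exists l : seq A, forall x : A, List.In x l.

Section OIN.
Variables (S : Type) (op : S -> S -> S) (opA : associative op).

(* adjoin a unit None to the semigroup *)
Definition oplus (x y : option S) : option S :=
  match x, y with
  | None, _ => y
  | _, None => x
  | Some a, Some b => Some (op a b)
  end.

Lemma oplusA : associative oplus.
Proof. by case=> [a|] [b|] [c|] //=; rewrite opA. Qed.

Lemma oplus0l : left_id None oplus. Proof. by case. Qed.
Lemma oplus0r : right_id None oplus. Proof. by case. Qed.

Definition sprod (l : seq (option S)) := foldr oplus None l.

Lemma sprod_cat l1 l2 : sprod (l1 ++ l2) = oplus (sprod l1) (sprod l2).
Proof. by elim: l1 => [|x l IH] /=; rewrite ?oplus0l // IH oplusA. Qed.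

(* product T_{a+1} ... T_b (1-based), i.e. of entries with 0-based index in [a, b) *)
Definition seg (T : seq (option S)) (a b : nat) : option S :=
  sprod [seq nth None T i | i <- iota a (b - a)].

Lemma seg_cat T a b c : a <= b -> b <= c ->
  seg T a c = oplus (seg T a b) (seg T b c).
Proof.
move=> ab bc; rewrite /seg.
have -> : c - a = (b - a) + (c - b) by lia.
by rewrite iotaD subnKC // map_cat sprod_cat.
Qed.

Lemma seg0 T a : seg T a a = None.
Proof. by rewrite /seg subnn. Qed.

Lemma seg1 T a : seg T a a.+1 = nth None T a.
Proof. by rewrite /seg subSnn /= oplus0r. Qed.

(* N(S)(phi), for phi given by its increasing list of values p = [phi 0; ...; phi n] *)
Definition nerve (p : seq nat) (T : seq (option S)) : seq (option S) :=
  mkseq (fun i => seg T (nth 0 p i) (nth 0 p i.+1)) (size p).-1.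

(* order-preserving injection [size s] -> [size t] *)
Definition oi_valid (p : seq nat) (n m : nat) : bool :=
  [&& size p == n.+1, sorted ltn p & all (fun i => i <= m) p].

Record oin_hom (s t : seq S) := OinHom {
  oin_map : seq nat;
  oin_valid : oi_valid oin_map (size s) (size t);
  oin_nerve : nerve oin_map (map Some t) = map Some s }.

Definition oin_obj := {s : seq S | 0 < size s}.

Lemma oin_id_valid (s : seq S) : oi_valid (iota 0 (size s).+1) (size s) (size s).
Proof.
rewrite /oi_valid size_iota eqxx iota_ltn_sorted /=.
apply/allP=> i; rewrite mem_iota /=; lia.
Qed.

Lemma nerve_iota (T : seq (option S)) :
  nerve (iota 0 (size T).+1) T = T.
Proof.
apply: (@eq_from_nth _ None); first by rewrite size_mkseq size_iota.
move=> i; rewrite size_mkseq size_iota => hi; have {}hi : i < size T by [].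
have h1 : i < (size T).+1 by apply: ltnW. rewrite nth_mkseq ?size_iota // (nth_iota 0 0 h1) (nth_iota 0 0 (hi : i.+1 < (size T).+1)) add0n add0n seg1 //.
Qed.

Definition oin_id (s : seq S) : oin_hom s s.
Proof.
refine (@OinHom s s (iota 0 (size s).+1) (oin_id_valid s) _).
by rewrite -(size_map Some s) nerve_iota.
Defined.

Lemma seg_nerve (q : seq nat) (U : seq (option S)) a b :
  sorted ltn q -> a <= b -> b < size q ->
  seg U (nth 0 q a) (nth 0 q b) = seg (nerve q U) a b.
Proof.
move=> sq ab; elim: b ab => [|b IH]; first by rewrite leqn0 => /eqP ->; rewrite !seg0.
rewrite leq_eqVlt => /orP [/eqP -> _|]; first by rewrite !seg0.
rewrite ltnS => ab bq.
have mono : forall i j, i <= j -> j < size q -> nth 0 q i <= nth 0 q j.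
  move=> i j ij jq.
  have sq' : sorted leq q by apply: sub_sorted sq => x y /ltnW.
  exact: (sorted_leq_nth leq_trans leqnn 0 sq' i j (leq_ltn_trans ij jq) jq ij).
rewrite (seg_cat U (mono _ _ ab (ltnW bq)) (mono _ _ (leqnSn b) bq)).
rewrite (seg_cat (nerve q U) ab (leqnSn b)) IH ?(ltnW bq) // seg1.
rewrite nth_mkseq //; rewrite -ltnS (ltn_predK bq) //.
Qed.

Lemma oin_comp_valid (s t u : seq S) (p q : seq nat) :
  oi_valid p (size s) (size t) -> oi_valid q (size t) (size u) ->
  oi_valid (map (nth 0 q) p) (size s) (size u).
Proof.
case/and3P=> /eqP sp sortp allp; case/and3P=> /eqP sq sortq allq.
rewrite /oi_valid size_map sp eqxx /=; apply/andP; split.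
  apply: (@homo_sorted_in _ _ [pred i | i <= size t] _ ltn ltn p _ allp sortp).
  move=> i j hi hj ij.
  have hi' : i < size q by rewrite sq ltnS.
  have hj' : j < size q by rewrite sq ltnS.
  exact: (sorted_ltn_nth ltn_trans 0 sortq i j hi' hj' ij).
apply/allP=> x /mapP [i ip ->]; apply: (allP allq); apply: mem_nth.
by rewrite sq ltnS (allP allp).
Qed.

Lemma oin_comp_nerve (s t u : seq S) (p q : seq nat) :
  oi_valid p (size s) (size t) -> oi_valid q (size t) (size u) ->
  nerve p (map Some t) = map Some s -> nerve q (map Some u) = map Some t ->
  nerve (map (nth 0 q) p) (map Some u) = map Some s.
Proof.
case/and3P=> /eqP sp sortp allp; case/and3P=> /eqP sq sortq allq hp hq.
rewrite -hp -hq.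
apply: (@eq_from_nth _ None); first by rewrite !size_mkseq size_map.
move=> j; rewrite size_mkseq size_map => hj.
have hj1 : j.+1 < size p by lia.
rewrite !nth_mkseq ?size_map // !(nth_map 0) ?(ltnW hj1) //.
apply: seg_nerve => //.
  have sp' : sorted leq p by apply: sub_sorted sortp => x y /ltnW.
  exact: (sorted_leq_nth leq_trans leqnn 0 sp' j j.+1 (ltnW hj1) hj1 (leqnSn j)).
by rewrite sq ltnS (allP allp) // mem_nth.
Qed.

Definition oin_comp (s t u : seq S) (q : oin_hom t u) (p : oin_hom s t) : oin_hom s u :=
  @OinHom s u (map (nth 0 (oin_map q)) (oin_map p))
    (oin_comp_valid (oin_valid p) (oin_valid q))
    (oin_comp_nerve (oin_valid p) (oin_valid q) (oin_nerve p) (oin_nerve q)).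

(* the category of elements OI_{++} / N(S) *)
Definition OI_N : CatData :=
  {| Obj := oin_obj;
     Hom := fun x y => oin_hom (val x) (val y);
     idm := fun x => oin_id (val x);
     comp := fun x y z g f => oin_comp g f |}.

End OIN.

(* In a quasi-Gröbner category, if a fixed object d maps to every term of a
   sequence e_n, then some e_i maps to a later e_j: property (F) makes each
   d -> e_n factor through one of finitely many d -> F c_i, a single index i
   recurs infinitely often, and Noetherianity of |c_i/C| yields a morphism
   between two of the corresponding objects of C.  In OI_{++}/N(S) with S
   infinite, take pairwise distinct s_n; every (s_0, s_n) receives a map from
   (s_0), but a morphism between sequences of equal length is an identity. *)

From Stdlib Require Import ClassicalEpsilon.
From Pilot Require Import Defs.
From mathcomp Require Import all_boot.

Set Implicit Arguments.
Unset Strict Implicit.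
Unset Printing Implicit Defensive.

Lemma ord_cover_recurrent (k : nat) (P : 'I_k -> nat -> Prop) :
  (forall n, exists i, P i n) ->
  exists i, forall N, exists2 n, N <= n & P i n.
Proof.
move=> cover; apply: NNPP => not_rec.
have /choice [bound boundP] : forall i, exists b, forall n, b <= n -> ~ P i n.
  move=> i; apply: NNPP => no_bound; apply: not_rec; exists i => N.
  apply: NNPP => no_n; apply: no_bound; exists N => n Nn Pin.
  by apply: no_n; exists n.
have [i Pi] := cover (\max_(i < k) bound i).
by apply: (boundP i _ _ Pi); apply: leq_bigmax.
Qed.

Lemma recurrent_subseq (P : nat -> Prop) :
  (forall N, exists2 n, N <= n & P n) ->
  exists s : nat -> nat, {homo s : m n / m < n} /\ forall m, P (s m).
Proof.
move=> rec; have /choice [next nextP] : forall N, exists n, N <= n /\ P n.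
  by move=> N; have [n] := rec N; exists n.
pose s m := iter m (fun x => next x.+1) (next 0).
exists s; split; last by case=> [|m]; [case: (nextP 0) | case: (nextP (s m).+1)].
apply: homo_ltn => [y x z|m]; first exact: ltn_trans.
by rewrite [s m.+1]iterS; case: (nextP (s m).+1).
Qed.

Lemma ord_cover_monotone_subseq (k : nat) (P : 'I_k -> nat -> Prop) :
  (forall n, exists i, P i n) ->
  exists i (s : nat -> nat), {homo s : m n / m < n} /\ forall m, P i (s m).
Proof.
move=> /ord_cover_recurrent [i /recurrent_subseq [s sP]].
by exists i, s.
Qed.

Lemma not_finite_injective_seq (A : Type) :
  ~ finite_type A -> exists t : nat -> A, injective t.
Proof.
move=> infA; have /choice [fresh freshP] : forall l : seq A, exists x, ~ List.In x l.
  move=> l; apply: NNPP => all_in; apply: infA; exists l => x.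
  by apply: NNPP => x_out; apply: all_in; exists x.
pose prefix n := iter n (fun l => fresh l :: l) [::].
have in_prefix j k : j < k -> List.In (fresh (prefix j)) (prefix k).
  elim: k => // k IH; rewrite ltnS leq_eqVlt => /orP [/eqP -> | /IH].
    by left.
  by right.
have distinct j k : j < k -> fresh (prefix j) <> fresh (prefix k).
  by move=> jk eq_jk; apply: (freshP (prefix k)); rewrite -eq_jk; apply: in_prefix.
exists (fun n => fresh (prefix n)) => j k eq_jk.
by case: (ltngtP j k) => // [/distinct | /distinct /(_ (esym eq_jk))].
Qed.

Definition has_hom (C : CatData) (a b : C) : Prop := inhabited (Hom a b).

Section HasHom.
Variables C D : CatData.

Lemma has_hom_trans (a b c : C) : has_hom a b -> has_hom b c -> has_hom a c.
Proof. by move=> [f] [g]; constructor; exact: (Defs.comp g f). Qed.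

Lemma has_hom_fhom (F : Functor C D) (a b : C) :
  has_hom a b -> has_hom (F a) (F b).
Proof. by move=> [f]; constructor; exact: (fhom F f). Qed.

Lemma isomorphic_has_hom (a b : C) : isomorphic a b -> has_hom a b /\ has_hom b a.
Proof. by move=> [u [v _]]; split; constructor. Qed.

Lemma noetherian_has_hom_seq (c : C) (x : nat -> C) :
  noetherian (@under_le C c) -> (forall n, has_hom c (x n)) ->
  exists i j, i < j /\ has_hom (x i) (x j).
Proof.
move=> noeth cx.
have /choice [y yP] : forall n, exists y : out_of c, projT1 y = x n.
  by move=> n; have [f] := cx n; exists (existT _ (x n) f).
have [i [j [ij [h _]]]] := noeth y.
by exists i, j; split=> //; rewrite -!yP; constructor.
Qed.

End HasHom.

Lemma quasi_groebner_has_hom_seq (D : CatData) (d : D) (e : nat -> D) :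
  quasi_groebner D -> (forall n, has_hom d (e n)) ->
  exists i j, i < j /\ has_hom (e i) (e j).
Proof.
move=> [C [F [_ groebC _ esurjF factorF]]] de.
have [k [cs [fs factor]]] := factorF d.
have cover n : exists i : 'I_k, exists c : C,
    has_hom (cs i) c /\ isomorphic (F c) (e n).
  have [c iso] := esurjF (e n); have [h] := de n; have [_ [v _]] := iso.
  have [i [g _]] := factor c (Defs.comp v h).
  by exists i, c; split; first by constructor.
have [i [s [s_mono /choice [c cP]]]] := ord_cover_monotone_subseq cover.
have [a [b [ab ab_hom]]] :=
  noetherian_has_hom_seq (groebC (cs i)).2 (fun m => (cP m).1).
have [_ e_Fc] := isomorphic_has_hom (cP a).2.
have [Fc_e _] := isomorphic_has_hom (cP b).2.
exists (s a), (s b); split; first exact: s_mono.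
exact: has_hom_trans e_Fc (has_hom_trans (has_hom_fhom F ab_hom) Fc_e).
Qed.

Section OIN.
Variables (S : Type) (op : S -> S -> S).

Lemma oi_valid_same_size (p : seq nat) (n : nat) :
  oi_valid p n n -> p = iota 0 n.+1.
Proof.
case/and3P=> /eqP size_p sorted_p /allP le_p.
have uniq_p : uniq p := sorted_uniq ltn_trans ltnn sorted_p.
have sub_p : {subset p <= iota 0 n.+1}.
  by move=> i /le_p i_le; rewrite mem_iota add0n ltnS.
have size_le : size (iota 0 n.+1) <= size p by rewrite size_iota size_p.
have [_ p_iota] := uniq_min_size uniq_p sub_p size_le.
exact: (irr_sorted_eq ltn_trans ltnn sorted_p (iota_ltn_sorted 0 n.+1) p_iota).
Qed.

Lemma oin_hom_same_size (s t : seq S) :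
  oin_hom op s t -> size s = size t -> s = t.
Proof.
move=> [p valid_p nerve_p] st.
rewrite st in valid_p; rewrite (oi_valid_same_size valid_p) in nerve_p.
apply: (@inj_map _ _ Some); first by move=> x y [].
by rewrite -nerve_p -(size_map Some) nerve_iota.
Qed.

End OIN.

Theorem proposition5p11 (S : Type) (op : S -> S -> S) (opA : associative op) :
  ~ finite_type S -> ~ quasi_groebner (OI_N opA).
Proof.
move=> /not_finite_injective_seq [t inj_t] qg.
pose d : OI_N opA := exist _ [:: t 0] isT.
pose e n : OI_N opA := exist _ [:: t 0; t n] isT.
have de n : has_hom d (e n).
  by constructor; exact: (@OinHom _ op [:: t 0] [:: t 0; t n] [:: 0; 1] isT erefl).
have [i [j [ij [h]]]] := quasi_groebner_has_hom_seq qg de.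
have /(_ erefl) [/inj_t eq_ij] := oin_hom_same_size h.
by rewrite eq_ij ltnn in ij.
Qed.
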